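(* Let $X$ be a locally convex space, let $T:X\rightrightarrows X^{*}$, and let $V\subset X$ with $V\cap D(T)\neq\emptyset$. The following are equivalent: (i) $T$ is $V$-representable; (ii) $T|_{V}\in\mathcal{M}(X)$ and $[\psi_{T|_{V}}=c]\cap(V\times X^{*})\subset T|_{V}$; (iii) $T|_{V}\in\mathcal{M}(X)$ and $[\psi_{T|_{V}}=c]\cap(V\times X^{*})=T|_{V}$; (iv) $\psi_{T|_{V}}$ is a $V$-representative of $T|_{V}$.
   Context: $(X,\tau)$ is a non-trivial Hausdorff locally convex space, $X^*$ its dual with weak-star topology $\omega^*$, $Z=X\times X^*$ with topology $\tau\times\omega^*$, $c(x,x^* )=\langle x,x^*\rangle$. Operators are identified with their graphs; $D(T)$ is the domain; $T|_V$ has graph $\operatorname{Graph}T\cap(V\times X^* )$. $\psi_T$ is the $\tau\times\omega^*$-lsc convex hull of $c+\iota_{\operatorname{Graph}T}$ (the greatest $\tau\times\omega^*$-lsc convex function majorized by it). $[f=g]=\{z\mid f(z)=g(z)\}$. $\mathcal M(X)$: monotone operators with non-empty graph. $\mathscr R$: proper convex $\tau\times\omega^*$-lsc $h:Z\to\overline{\mathbb R}$ with $h\ge c$. $T$ is $V$-representable if $V\cap D(T)\neq\emptyset$ and there is $h\in\mathscr R$ (a $V$-representative of $T$) with $[h=c]\cap(V\times X^* )=\operatorname{Graph}(T|_V)$. *)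

From HB Require Import structures.
From mathcomp Require Import all_boot all_order all_algebra.
From mathcomp Require Import all_classical all_reals all_analysis.
Set Implicit Arguments. Unset Strict Implicit. Unset Printing Implicit Defensive.
Import Order.TTheory GRing.Theory Num.Theory numFieldTopology.Exports.
Local Open Scope classical_set_scope.
Local Open Scope ring_scope.

Section Defs.
Variables (R : realType) (X : tvsType R).

Record dual := Dual {
  dfun :> X -> R;
  dfun_linear : forall (a : R) (x y : X), dfun (a *: x + y) = a * dfun x + dfun y;
  dfun_cont : continuous dfun }.

Definition coupling (z : X * dual) : R := z.2 z.1.

(* open sets of Z for the product topology tau x weak-star *)
Definition Zopen (U : set (X * dual)) : Prop :=
  forall z, U z -> exists A : set X, [/\ open A, A z.1 &
    exists (n : nat) (w : 'I_n -> X) (e : R), 0 < e /\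
      forall (y : X) (psi : dual), A y ->
        (forall i, `|psi (w i) - z.2 (w i)| < e) -> U (y, psi)].

Definition Zlsc (h : X * dual -> \bar R) : Prop :=
  forall r : R, Zopen [set z | (r%:E < h z)%E].

Definition Zcomb (t : R) (z1 z2 z3 : X * dual) : Prop :=
  z3.1 = t *: z1.1 + (1 - t) *: z2.1 /\
  forall y, z3.2 y = t * z1.2 y + (1 - t) * z2.2 y.

(* convexity of an extended-real function (convex epigraph) *)
Definition Zconvex (h : X * dual -> \bar R) : Prop :=
  forall (t : R) (z1 z2 z3 : X * dual) (a1 a2 : R), 0 <= t <= 1 ->
    Zcomb t z1 z2 z3 -> (h z1 <= a1%:E)%E -> (h z2 <= a2%:E)%E ->
    (h z3 <= (t * a1 + (1 - t) * a2)%:E)%E.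

Definition Zproper (h : X * dual -> \bar R) : Prop :=
  (forall z, h z != -oo%E) /\ exists z, h z != +oo%E.

Definition reprClass (h : X * dual -> \bar R) : Prop :=
  [/\ Zproper h, Zconvex h, Zlsc h & forall z, ((coupling z)%:E <= h z)%E].

Definition lsc_conv_hull (f : X * dual -> \bar R) : X * dual -> \bar R :=
  fun z => ereal_sup [set g z | g in
     [set g | Zconvex g /\ Zlsc g /\ forall z', (g z' <= f z')%E]].

(* operators are identified with their graphs *)
Definition dom (T : set (X * dual)) : set X := [set x | exists phi, T (x, phi)].
Definition restr (T : set (X * dual)) (V : set X) : set (X * dual) :=
  [set z | T z /\ V z.1].

Definition c_plus_ind (T : set (X * dual)) (z : X * dual) : \bar R :=
  if z \in T then (coupling z)%:E else +oo%E.

Definition psiT (T : set (X * dual)) := lsc_conv_hull (c_plus_ind T).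

Definition monotone_op (T : set (X * dual)) : Prop :=
  forall x y (phi psi : dual), T (x, phi) -> T (y, psi) ->
    0 <= phi (x - y) - psi (x - y).

Definition in_M (T : set (X * dual)) : Prop := monotone_op T /\ T !=set0.

Definition eq_c_on (h : X * dual -> \bar R) (V : set X) : set (X * dual) :=
  [set z | h z = (coupling z)%:E /\ V z.1].

Definition V_representative (V : set X) (T : set (X * dual)) h : Prop :=
  reprClass h /\ eq_c_on h V = restr T V.

Definition V_representable (V : set X) (T : set (X * dual)) : Prop :=
  (V `&` dom T !=set0) /\ exists h, V_representative V T h.

End Defs.

From HB Require Import structures.
From mathcomp Require Import all_boot all_order all_algebra.
From mathcomp Require Import all_classical all_reals all_analysis.
From mathcomp Require Import lra ring.
Import Order.TTheory GRing.Theory Num.Theory numFieldTopology.Exports.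
Set Implicit Arguments. Unset Strict Implicit.
Local Open Scope classical_set_scope.
Local Open Scope ring_scope.

(* Any representative h of T|_V is an lsc convex minorant of c + iota_{T|_V},
   hence h <= psi_{T|_V} <= c + iota_{T|_V}; since h >= c, the set where
   psi_{T|_V} = c on V x X^* is squeezed onto T|_V.  Conversely, psi_S >= c
   as soon as S is monotone: at a point z monotonically related to S the
   Fitzpatrick function of S u {z} is an lsc convex minorant of c + iota_S
   which is at least c(z) at z, and at any other z already the Fitzpatrick
   function of S exceeds c(z).  Monotonicity of T|_V itself follows from
   midpoint convexity of a representative, which equals c on T|_V and
   dominates c. *)

Section DualAlgebra.
Variables (R : realType) (X : tvsType R).
Implicit Types (phi psi : dual X) (x y : X).

Lemma dual0 phi : phi 0 = 0.
Proof. by have := dfun_linear phi 1 0 0; rewrite scale1r addr0 mul1r; lra. Qed.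

Lemma dualD phi x y : phi (x + y) = phi x + phi y.
Proof. by have := dfun_linear phi 1 x y; rewrite scale1r mul1r. Qed.

Lemma dualZ phi a x : phi (a *: x) = a * phi x.
Proof. by have := dfun_linear phi a x 0; rewrite !addr0 dual0 addr0. Qed.

Lemma dualN phi x : phi (- x) = - phi x.
Proof. by rewrite -scaleN1r dualZ mulN1r. Qed.

Lemma dualB phi x y : phi (x - y) = phi x - phi y.
Proof. by rewrite dualD dualN. Qed.

Definition dual_comb_fun (t : R) phi psi (y : X) := t * phi y + (1 - t) * psi y.

Lemma dual_comb_linear t phi psi a x y :
  dual_comb_fun t phi psi (a *: x + y) =
  a * dual_comb_fun t phi psi x + dual_comb_fun t phi psi y.
Proof. by rewrite /dual_comb_fun !dualD !dualZ; ring. Qed.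

Lemma dual_comb_continuous t phi psi : continuous (dual_comb_fun t phi psi).
Proof.
move=> x; apply: cvgD; apply: cvgM; do ?[exact: cvg_cst | exact: dfun_cont].
Qed.

Definition dual_comb t phi psi : dual X :=
  Dual (@dual_comb_linear t phi psi) (@dual_comb_continuous t phi psi).

Lemma Zcomb_dual_comb t x y phi psi :
  Zcomb t (x, phi) (y, psi) (t *: x + (1 - t) *: y, dual_comb t phi psi).
Proof. by []. Qed.

End DualAlgebra.

Section LscConvHull.
Variables (R : realType) (X : tvsType R) (f : X * dual X -> \bar R).

Lemma lsc_conv_hull_le z : (lsc_conv_hull f z <= f z)%E.
Proof. by apply: ge_ereal_sup => _ [g [_ [_ gf]] <-]; exact: gf. Qed.

Lemma lsc_conv_hull_ge g : Zconvex g -> Zlsc g ->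
  (forall z, (g z <= f z)%E) -> forall z, (g z <= lsc_conv_hull f z)%E.
Proof. by move=> gc gl gf z; apply: ereal_sup_ubound; exists g. Qed.

Lemma lsc_conv_hull_convex : Zconvex (lsc_conv_hull f).
Proof.
move=> t z1 z2 z3 a1 a2 t01 z3E h1 h2.
apply: ge_ereal_sup => _ [g [gc [gl gf]] <-].
by apply: (gc t z1 z2 z3) => //; apply: le_trans (lsc_conv_hull_ge gc gl gf _) _.
Qed.

Lemma lsc_conv_hull_lsc : Zlsc (lsc_conv_hull f).
Proof.
move=> r z /= rlt.
have [_ [g [gc [gl gf]] <-] rg] := ereal_sup_gt rlt.
have [A [oA Az [n [w [e [e0 nbhs_sub]]]]]] := gl r z rg.
exists A; split => //; exists n, w, e; split => // y psi Ay near_psi.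
exact: lt_le_trans (nbhs_sub y psi Ay near_psi) (lsc_conv_hull_ge gc gl gf _).
Qed.

End LscConvHull.

Section Fitzpatrick.
Variables (R : realType) (X : tvsType R).
Implicit Types (S : set (X * dual X)) (a z : X * dual X).

Definition fitz_affine a z : R := a.2 z.1 + z.2 a.1 - a.2 a.1.

Definition fitzpatrick S z : \bar R := ereal_sup [set (fitz_affine a z)%:E | a in S].

Lemma coupling_sub_fitz_affine a z :
  coupling z - fitz_affine a z = z.2 (z.1 - a.1) - a.2 (z.1 - a.1).
Proof. by rewrite /coupling /fitz_affine !dualB; ring. Qed.

Lemma fitz_affine_le_fitzpatrick S a z :
  S a -> ((fitz_affine a z)%:E <= fitzpatrick S z)%E.
Proof. by move=> Sa; apply: ereal_sup_ubound; exists a. Qed.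

Lemma fitzpatrick_convex S : Zconvex (fitzpatrick S).
Proof.
move=> t z1 z2 z3 a1 a2 /andP[t0 t1] [z3E1 z3E2] h1 h2.
apply: ge_ereal_sup => _ [a Sa <-]; rewrite lee_fin.
have le1 : fitz_affine a z1 <= a1.
  by rewrite -lee_fin; apply: le_trans h1; exact: fitz_affine_le_fitzpatrick.
have le2 : fitz_affine a z2 <= a2.
  by rewrite -lee_fin; apply: le_trans h2; exact: fitz_affine_le_fitzpatrick.
have t'_ge0 : 0 <= 1 - t by lra.
have := ler_wpM2l t0 le1; have := ler_wpM2l t'_ge0 le2.
by rewrite /fitz_affine z3E1 z3E2 dualD !dualZ; nra.
Qed.

Lemma fitzpatrick_lsc S : Zlsc (fitzpatrick S).
Proof.
move=> r z /= rlt.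
have [_ [a Sa <-]] := ereal_sup_gt rlt; rewrite lte_fin => ra.
pose d := fitz_affine a z - r.
have d_gt0 : 0 < d by rewrite /d; lra.
exists (a.2 @^-1` [set u | a.2 z.1 - d / 2 < u]); split.
- by apply: open_comp; [move=> y _; exact: dfun_cont | exact: open_gt].
- by rewrite /=; lra.
exists 1%N, (fun=> a.1), (d / 2); split; first lra.
move=> y psi /= ay /(_ ord0); rewrite ltr_norml => /andP[psi_lb psi_ub].
apply: lt_le_trans (fitz_affine_le_fitzpatrick (y, psi) Sa).
by rewrite lte_fin; move: ay psi_lb psi_ub; rewrite /d /fitz_affine /=; lra.
Qed.

Lemma fitzpatrick_le_c_plus_ind S T : monotone_op S -> T `<=` S ->
  forall z, (fitzpatrick S z <= c_plus_ind T z)%E.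
Proof.
move=> monoS TS z; rewrite /c_plus_ind; case: ifPn => [/set_mem Tz|_]; last exact: leey.
apply: ge_ereal_sup => _ [[y psi] Sa <-]; rewrite lee_fin.
case: z Tz => x phi Tz; have := coupling_sub_fitz_affine (y, psi) (x, phi).
have := monoS _ _ _ _ (TS _ Tz) Sa; lra.
Qed.

End Fitzpatrick.

Section PsiT.
Variables (R : realType) (X : tvsType R).
Implicit Types (S : set (X * dual X)) (z : X * dual X).

Lemma c_plus_ind_coupling S z : S z -> c_plus_ind S z = (coupling z)%:E.
Proof. by move=> Sz; rewrite /c_plus_ind ifT //; exact: mem_set. Qed.

Lemma psiT_ge_coupling S : monotone_op S -> forall z, ((coupling z)%:E <= psiT S z)%E.
Proof.
move=> monoS [x0 p0].
have [related|/existsNP[a /not_implyP[Sa /negP]]] :=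
  pselect (forall a, S a -> 0 <= p0 (x0 - a.1) - a.2 (x0 - a.1)).
- pose S' := S `|` [set (x0, p0)].
  have monoS' : monotone_op S'.
    move=> x y phi psi [Sx|[-> ->]] [Sy|[-> ->]]; do ?[exact: monoS | by rewrite subrr].
      by have := related _ Sx; rewrite /= !dualB; lra.
    exact: related (y, psi) Sy.
  apply: le_trans (lsc_conv_hull_ge (@fitzpatrick_convex _ _ S')
    (@fitzpatrick_lsc _ _ S') (fitzpatrick_le_c_plus_ind monoS' (@subsetUl _ S _)) _).
  have S'z : S' (x0, p0) by right.
  apply: le_trans (fitz_affine_le_fitzpatrick _ S'z).
  by rewrite lee_fin /fitz_affine /coupling; lra.
- rewrite -ltNge => unrelated.
  apply: le_trans (lsc_conv_hull_ge (@fitzpatrick_convex _ _ S)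
    (@fitzpatrick_lsc _ _ S) (fitzpatrick_le_c_plus_ind monoS (@subset_refl _ S)) _).
  apply: le_trans (fitz_affine_le_fitzpatrick _ Sa).
  by have := coupling_sub_fitz_affine a (x0, p0); rewrite lee_fin; lra.
Qed.

Lemma psiT_coupling S z : monotone_op S -> S z -> psiT S z = (coupling z)%:E.
Proof.
move=> monoS Sz; apply/le_anti; rewrite psiT_ge_coupling // andbT.
by rewrite -(c_plus_ind_coupling Sz); exact: lsc_conv_hull_le.
Qed.

Lemma psiT_reprClass S : in_M S -> reprClass (psiT S).
Proof.
move=> [monoS [z Sz]]; split.
- split; last by exists z; rewrite psiT_coupling.
  by move=> z'; apply/negP => /eqP psiNy; have := psiT_ge_coupling monoS z'; rewrite psiNy.
- exact: lsc_conv_hull_convex.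
- exact: lsc_conv_hull_lsc.
- exact: psiT_ge_coupling.
Qed.

Lemma le_psiT h S : Zconvex h -> Zlsc h ->
  (forall z, S z -> h z = (coupling z)%:E) -> forall z, (h z <= psiT S z)%E.
Proof.
move=> hc hl hS; apply: lsc_conv_hull_ge => // z.
rewrite /c_plus_ind; case: ifPn => [/set_mem/hS -> //|_]; exact: leey.
Qed.

Lemma monotone_of_convex_ge_coupling h S : Zconvex h ->
  (forall z, ((coupling z)%:E <= h z)%E) ->
  (forall z, S z -> h z = (coupling z)%:E) -> monotone_op S.
Proof.
move=> hc hge hS x y phi psi Sx Sy.
have half01 : 0 <= (2^-1 : R) <= 1 by apply/andP; split; lra.
have hx : (h (x, phi) <= (coupling (x, phi))%:E)%E by rewrite hS.
have hy : (h (y, psi) <= (coupling (y, psi))%:E)%E by rewrite hS.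
have := hc _ _ _ _ _ _ half01 (Zcomb_dual_comb _ x y phi psi) hx hy.
move/(le_trans (hge _)); rewrite lee_fin /coupling /= /dual_comb_fun.
by rewrite !dualB !dualD !dualZ; lra.
Qed.

End PsiT.

Section Representability.
Variables (R : realType) (X : tvsType R) (T : set (X * dual X)) (V : set X).

Lemma restr_restr : restr (restr T V) V = restr T V.
Proof. by apply/seteqP; split => z /= => [[]|[Tz Vz]]. Qed.

Lemma V_representative_restr h :
  V_representative V (restr T V) h <-> V_representative V T h.
Proof. by rewrite /V_representative restr_restr. Qed.

Lemma V_representative_coupling h z :
  V_representative V T h -> restr T V z -> h z = (coupling z)%:E.
Proof. by move=> [_ heq]; rewrite -heq; case. Qed.

Lemma V_representable_in_M : V_representable V T -> in_M (restr T V).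
Proof.
move=> [[x [Vx [phi Tx]]] [h hrep]]; split; last by exists (x, phi).
have [[_ hc _ hge] _] := hrep.
by apply: (monotone_of_convex_ge_coupling hc hge) => z; exact: V_representative_coupling.
Qed.

Lemma V_representable_psiT : V_representable V T ->
  eq_c_on (psiT (restr T V)) V = restr T V.
Proof.
move=> rep; have [_ [h hrep]] := rep; have [[_ hc hl hge] heq] := hrep.
have [monoTV _] := V_representable_in_M rep.
have hpsi := le_psiT hc hl (fun z => V_representative_coupling hrep).
apply/seteqP; split => z.
- move=> [psi_z Vz]; rewrite -heq; split => //.
  by apply/le_anti; rewrite hge andbT -psi_z.
- by move=> TVz; split; [exact: psiT_coupling | case: TVz].
Qed.

Lemma psiT_V_representative :
  in_M (restr T V) -> eq_c_on (psiT (restr T V)) V `<=` restr T V ->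
  V_representative V (restr T V) (psiT (restr T V)).
Proof.
move=> MTV sub; have [monoTV _] := MTV; split; first exact: psiT_reprClass.
rewrite restr_restr; apply/seteqP; split => // z TVz.
by split; [exact: psiT_coupling | case: TVz].
Qed.

End Representability.

Theorem theorem2p14 (R : realType) (X : tvsType R)
  (Xhaus : hausdorff_space X) (Xnontriv : exists x : X, x != 0)
  (T : set (X * dual X)) (V : set X) (HVD : V `&` dom T !=set0) :
  let TV := restr T V in
  (V_representable V T <-> (in_M TV /\ eq_c_on (psiT TV) V `<=` TV)) /\
  (V_representable V T <-> (in_M TV /\ eq_c_on (psiT TV) V = TV)) /\
  (V_representable V T <-> V_representative V TV (psiT TV)).
Proof.
move=> TV.
have i_iii : V_representable V T -> in_M TV /\ eq_c_on (psiT TV) V = TV.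
  by move=> rep; split; [exact: V_representable_in_M | exact: V_representable_psiT].
have ii_iv : in_M TV /\ eq_c_on (psiT TV) V `<=` TV -> V_representative V TV (psiT TV).
  by case; exact: psiT_V_representative.
have iv_i : V_representative V TV (psiT TV) -> V_representable V T.
  by move/V_representative_restr => rep; split => //; exists (psiT TV).
have iii_ii : in_M TV /\ eq_c_on (psiT TV) V = TV -> in_M TV /\ eq_c_on (psiT TV) V `<=` TV.
  by case=> MTV ->; split.
split; [|split]; split.
- by move/i_iii/iii_ii.
- by move/ii_iv/iv_i.
- exact: i_iii.
- by move/iii_ii/ii_iv/iv_i.
- by move/i_iii/iii_ii/ii_iv.
- exact: iv_i.
Qed.
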